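(* Let $\lambda_C$, $\mathrm{VFS}$, $\mathrm{CPS}$, the VFS-translation ($V^{\circ}$, $(M;x.N)$, $M^{\bullet}$), the CPS-translation ($V^{\dagger}$, $(M:K)$, $M^{\star}$, $\overline{M}$) and the negative translation ($V^{\sim}$, $M^{\wr}$, $M^{-}$) be as described in the context. Then: (1) for all values $V$ of $\lambda_C$, $(V^{\circ})^{\sim}=V^{\dagger}$; (2) for all terms $M$ of $\lambda_C$ and all terms $N$ of $\mathrm{VFS}$, $((M;x.N))^{\wr}=(M:\lambda x.N^{\wr})$; (3) for all terms $M$ of $\lambda_C$, $(M^{\bullet})^{\wr}=M^{\star}$; (4) for all terms $M$ of $\lambda_C$, $(M^{\bullet})^{-}=\overline{M}$. All equalities are syntactic, up to $\alpha$-conversion.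
   Context: Terms are considered up to $\alpha$-conversion. $\lambda_C$: terms $M,N,P,Q::= V\mid MN\mid \mathsf{let}\,x:=M\,\mathsf{in}\,N$ (binding $x$ in $N$), values $V,W::=x\mid\lambda x.M$. $\mathrm{VFS}$: terms $M,N::=\uparrow V\mid \mathsf{C}_v(V,c)$; values $V,W::=x\mid\lambda x.M$; formal contexts $c::= x.M\mid (W,x.M)$ ($x$ bound in $M$). $\mathrm{CPS}$ (a syntax of $\lambda$-terms with a fixed distinguished covariable $k$): commands $M,N::= kV\mid KV\mid VWK$; continuations $K::=\lambda x.M$; values $V,W::=\lambda x.P\mid x$; terms $P::=\lambda k.M$. (Application associates to the left, so $VWK=(VW)K$.) VFS-translation: $x^{\circ}=x$; $(\lambda x.M)^{\circ}=\lambda x.M^{\bullet}$; $M^{\bullet}=(M;x.\uparrow x)$; $(V;x.N)=\mathsf{C}_v(V^{\circ},x.N)$; $(PQ;x.N)=(P;m.(mQ;x.N))$ if $P$ is not a value; $(VQ;x.N)=(Q;n.(Vn;x.N))$ if $Q$ is not a value; $(VW;x.N)=\mathsf{C}_v(V^{\circ},(W^{\circ},x.N))$; $(\mathsf{let}\,y:=M\,\mathsf{in}\,P;x.N)=(M;y.(P;x.N))$. CPS-translation from $\lambda_C$ to $\mathrm{CPS}$: $x^{\dagger}=x$; $(\lambda x.M)^{\dagger}=\lambda x.\overline{M}$; $\overline{M}=\lambda k.M^{\star}$; $M^{\star}=(M:\lambda x.kx)$; for a continuation $K$: $(V:K)=KV^{\dagger}$; $(PQ:K)=(P:\lambda m.(mQ:K))$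 if $P$ is not a value; $(VQ:K)=(Q:\lambda n.(Vn:K))$ if $Q$ is not a value; $(VW:K)=V^{\dagger}W^{\dagger}K$; $(\mathsf{let}\,y:=M\,\mathsf{in}\,P:K)=(M:\lambda y.(P:K))$. Negative translation from $\mathrm{VFS}$ to $\mathrm{CPS}$: $x^{\sim}=x$; $(\lambda x.M)^{\sim}=\lambda x.M^{-}$; $M^{-}=\lambda k.M^{\wr}$; $(\uparrow V)^{\wr}=kV^{\sim}$; $\mathsf{C}_v(V,x.M)^{\wr}=(\lambda x.M^{\wr})V^{\sim}$; $\mathsf{C}_v(V,(W,x.M))^{\wr}=V^{\sim}W^{\sim}(\lambda x.M^{\wr})$. *)

(* Syntax is represented with de Bruijn indices, so syntactic equality of
   Rocq terms is exactly equality up to alpha-conversion.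
   In CPS the distinguished covariable k lives in its own namespace:
   [CKApp V] is "k V" and [KLam M] is "lambda k. M"; an occurrence of k
   always refers to the nearest enclosing "lambda k" (or is free). *)

Inductive lterm : Type :=
| LVal : lval -> lterm
| LApp : lterm -> lterm -> lterm
| LLet : lterm -> lterm -> lterm          (* let x := M in N, x bound in N *)
with lval : Type :=
| LVar : nat -> lval
| LLam : lterm -> lval.

Inductive vterm : Type :=
| VRet : vval -> vterm
| VCv : vval -> vctx -> vterm
with vval : Type :=
| VVar : nat -> vval
| VLam : vterm -> vval
with vctx : Type :=
| VAbs : vterm -> vctx                    (* x.M, x bound in M *)
| VPair : vval -> vterm -> vctx.          (* (W, x.M), x bound in M *)

Inductive ccmd : Type :=
| CKApp : cval -> ccmd                    (* k V *)
| CContApp : ccont -> cval -> ccmd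
| CVWK : cval -> cval -> ccont -> ccmd
with ccont : Type :=
| CLam : ccmd -> ccont
with cval : Type :=
| CVar : nat -> cval
| CLamP : cterm -> cval
with cterm : Type :=
| KLam : ccmd -> cterm.

Definition liftn (c n : nat) : nat := if Nat.ltb n c then n else S n.

Fixpoint lshift (c : nat) (M : lterm) : lterm :=
  match M with
  | LVal V => LVal (lshiftV c V)
  | LApp P Q => LApp (lshift c P) (lshift c Q)
  | LLet M1 P => LLet (lshift c M1) (lshift (S c) P)
  end
with lshiftV (c : nat) (V : lval) : lval :=
  match V with
  | LVar n => LVar (liftn c n)
  | LLam M => LLam (lshift (S c) M)
  end.

Fixpoint vshift (c : nat) (M : vterm) : vterm :=
  match M with
  | VRet V => VRet (vshiftV c V)
  | VCv V k => VCv (vshiftV c V) (vshiftC c k)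
  end
with vshiftV (c : nat) (V : vval) : vval :=
  match V with
  | VVar n => VVar (liftn c n)
  | VLam M => VLam (vshift (S c) M)
  end
with vshiftC (c : nat) (k : vctx) : vctx :=
  match k with
  | VAbs M => VAbs (vshift (S c) M)
  | VPair W M => VPair (vshiftV c W) (vshift (S c) M)
  end.

Fixpoint cshiftM (c : nat) (M : ccmd) : ccmd :=
  match M with
  | CKApp V => CKApp (cshiftV c V)
  | CContApp K V => CContApp (cshiftK c K) (cshiftV c V)
  | CVWK V W K => CVWK (cshiftV c V) (cshiftV c W) (cshiftK c K)
  end
with cshiftK (c : nat) (K : ccont) : ccont :=
  match K with
  | CLam M => CLam (cshiftM (S c) M)
  end
with cshiftV (c : nat) (V : cval) : cval :=
  match V with
  | CVar n => CVar (liftn c n)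
  | CLamP P => CLamP (cshiftP (S c) P)
  end
with cshiftP (c : nat) (P : cterm) : cterm :=
  match P with
  | KLam M => KLam (cshiftM c M)
  end.

(* ---------- sizes (used as fuel; the translations below are the paper's
   clauses verbatim, defined by recursion on a fuel argument which is
   always sufficient when instantiated with the size of the term) ---------- *)
Fixpoint lsize (M : lterm) : nat :=
  match M with
  | LVal V => S (lsizeV V)
  | LApp P Q => S (lsize P + lsize Q)
  | LLet M1 P => S (lsize M1 + lsize P)
  end
with lsizeV (V : lval) : nat :=
  match V with
  | LVar _ => 1
  | LLam M => S (lsize M)
  end.

(* ---------- VFS-translation: V°, (M; x.N), M• ----------
   [seq_f f M N] is (M; x.N) where N is a VFS term in which the bound
   variable x is de Bruijn index 0. *)
Fixpoint vo_f (f : nat) (V : lval) {struct f} : vval :=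
  match f with
  | O => VVar 0
  | S f =>
    match V with
    | LVar n => VVar n
    | LLam M => VLam (seq_f f M (VRet (VVar 0)))
    end
  end
with seq_f (f : nat) (M : lterm) (N : vterm) {struct f} : vterm :=
  match f with
  | O => N
  | S f =>
    match M with
    | LVal V => VCv (vo_f f V) (VAbs N)
    | LApp P Q =>
      match P with
      | LApp _ _ | LLet _ _ =>
        (* (PQ;x.N) = (P; m.(mQ; x.N)), P not a value *)
        seq_f f P (seq_f f (LApp (LVal (LVar 0)) (lshift 0 Q)) (vshift 1 N))
      | LVal V =>
        match Q with
        | LApp _ _ | LLet _ _ =>
          (* (VQ;x.N) = (Q; n.(Vn; x.N)), Q not a value *)
          seq_f f Q (seq_f f (LApp (LVal (lshiftV 0 V)) (LVal (LVar 0))) (vshift 1 N))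
        | LVal W =>
          VCv (vo_f f V) (VPair (vo_f f W) N)
        end
      end
    | LLet M1 P =>
      (* (let y := M1 in P; x.N) = (M1; y.(P; x.N)) *)
      seq_f f M1 (seq_f f P (vshift 1 N))
    end
  end.

Definition vo (V : lval) : vval := vo_f (lsizeV V) V.
Definition vseq (M : lterm) (N : vterm) : vterm := seq_f (lsize M) M N.
Definition bullet (M : lterm) : vterm := vseq M (VRet (VVar 0)).

Fixpoint dag_f (f : nat) (V : lval) {struct f} : cval :=
  match f with
  | O => CVar 0
  | S f =>
    match V with
    | LVar n => CVar n
    | LLam M =>
      CLamP (KLam (cps_f f M (CLam (CKApp (CVar 0)))))
    end
  end
with cps_f (f : nat) (M : lterm) (K : ccont) {struct f} : ccmd :=
  match f with
  | O => CContApp K (CVar 0)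
  | S f =>
    match M with
    | LVal V => CContApp K (dag_f f V)
    | LApp P Q =>
      match P with
      | LApp _ _ | LLet _ _ =>
        (* (PQ:K) = (P : λm.(mQ : K)) *)
        cps_f f P (CLam (cps_f f (LApp (LVal (LVar 0)) (lshift 0 Q)) (cshiftK 0 K)))
      | LVal V =>
        match Q with
        | LApp _ _ | LLet _ _ =>
          (* (VQ:K) = (Q : λn.(Vn : K)) *)
          cps_f f Q (CLam (cps_f f (LApp (LVal (lshiftV 0 V)) (LVal (LVar 0))) (cshiftK 0 K)))
        | LVal W => CVWK (dag_f f V) (dag_f f W) K
        end
      end
    | LLet M1 P =>
      (* (let y := M1 in P : K) = (M1 : λy.(P : K)) *)
      cps_f f M1 (CLam (cps_f f P (cshiftK 0 K)))
    end
  end.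

Definition dag (V : lval) : cval := dag_f (lsizeV V) V.
Definition cps (M : lterm) (K : ccont) : ccmd := cps_f (lsize M) M K.
Definition star (M : lterm) : ccmd := cps M (CLam (CKApp (CVar 0))).
Definition overline (M : lterm) : cterm := KLam (star M).

Fixpoint wr (M : vterm) : ccmd :=
  match M with
  | VRet V => CKApp (tilde V)
  | VCv V (VAbs M1) => CContApp (CLam (wr M1)) (tilde V)
  | VCv V (VPair W M1) => CVWK (tilde V) (tilde W) (CLam (wr M1))
  end
with tilde (V : vval) : cval :=
  match V with
  | VVar n => CVar n
  | VLam M => CLamP (KLam (wr M))
  end.

Definition minus (M : vterm) : cterm := KLam (wr M).

(* The negative translation undoes the administrative structure of the
   VFS-translation clause by clause: (V; x.N) becomes (λx.N≀) V~ = (V : λx.N≀),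
   C_v(V°, (W°, x.N)) becomes V~ W~ (λx.N≀), and the continuation λx.N≀ of
   every non-value clause is threaded exactly as in the CPS-translation.
   A simultaneous induction on the fuel therefore gives (1) and (2), the only
   non-structural ingredient being that ≀ commutes with the shifts that make
   room for the administrative variables m and n. Then (3) is (2) with
   N = ↑x, and (4) follows from (3). *)

From Stdlib Require Import Lia.

Scheme vterm_mut := Induction for vterm Sort Prop
with vval_mut := Induction for vval Sort Prop
with vctx_mut := Induction for vctx Sort Prop.
Combined Scheme vterm_vval_vctx_mutind from vterm_mut, vval_mut, vctx_mut.

Scheme lterm_mut := Induction for lterm Sort Prop
with lval_mut := Induction for lval Sort Prop.
Combined Scheme lterm_lval_mutind from lterm_mut, lval_mut.

(* [wr] translates a context only together with the value it is applied to,
   so the invariant for a context [k] is stated for [VCv V k]. *)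
Lemma wr_tilde_vshift :
  (forall N c, wr (vshift c N) = cshiftM c (wr N)) /\
  (forall V c, tilde (vshiftV c V) = cshiftV c (tilde V)) /\
  (forall k c V, tilde (vshiftV c V) = cshiftV c (tilde V) ->
     wr (vshift c (VCv V k)) = cshiftM c (wr (VCv V k))).
Proof.
  apply vterm_vval_vctx_mutind; simpl; intros.
  - rewrite H; reflexivity.
  - auto.
  - reflexivity.
  - rewrite H; reflexivity.
  - rewrite H, H0; reflexivity.
  - rewrite H, H0, H1; reflexivity.
Qed.

Lemma wr_vshift (c : nat) (N : vterm) : wr (vshift c N) = cshiftM c (wr N).
Proof. apply wr_tilde_vshift. Qed.

Lemma lsize_lshift_lshiftV :
  (forall M c, lsize (lshift c M) = lsize M) /\
  (forall V c, lsizeV (lshiftV c V) = lsizeV V).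
Proof.
  apply lterm_lval_mutind; simpl; intros; rewrite ?H, ?H0; reflexivity.
Qed.

Lemma lsize_lshift (c : nat) (M : lterm) : lsize (lshift c M) = lsize M.
Proof. apply lsize_lshift_lshiftV. Qed.

Lemma lsizeV_lshiftV (c : nat) (V : lval) : lsizeV (lshiftV c V) = lsizeV V.
Proof. apply lsize_lshift_lshiftV. Qed.

Lemma lsize_pos (M : lterm) : 0 < lsize M.
Proof. destruct M; simpl; lia. Qed.

Ltac solve_fuel :=
  simpl in *; rewrite ?lsize_lshift, ?lsizeV_lshiftV; lia.

Lemma tilde_vo_f_wr_seq_f (f : nat) :
  (forall V, lsizeV V <= f -> tilde (vo_f f V) = dag_f f V) /\
  (forall M N, lsize M <= f -> wr (seq_f f M N) = cps_f f M (CLam (wr N))).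
Proof.
  induction f as [|f [IHV IHM]]; split.
  - reflexivity.
  - intros M N HM; pose proof (lsize_pos M); lia.
  - intros [n|M] HV; simpl in *; rewrite ?IHM by lia; reflexivity.
  - intros [V|P Q|M1 P] N HM.
    + simpl in *; rewrite IHV by lia; reflexivity.
    + (* A non-value subterm has size at least 2, which pays for the
         administrative application [m Q] or [V n] built around it. *)
      destruct P as [V|P1 P2|P1 P2]; [destruct Q as [W|Q1 Q2|Q1 Q2]|..];
        try pose proof (lsize_pos P1); try pose proof (lsize_pos P2);
        try pose proof (lsize_pos Q1); try pose proof (lsize_pos Q2);
        simpl; rewrite ?IHV, ?IHM, ?wr_vshift by solve_fuel; reflexivity.
    + simpl in *; rewrite !IHM, wr_vshift by lia; reflexivity.
Qed.

Lemma tilde_vo (V : lval) : tilde (vo V) = dag V.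
Proof. apply tilde_vo_f_wr_seq_f; lia. Qed.

Lemma wr_vseq (M : lterm) (N : vterm) : wr (vseq M N) = cps M (CLam (wr N)).
Proof. apply tilde_vo_f_wr_seq_f; lia. Qed.

Lemma wr_bullet (M : lterm) : wr (bullet M) = star M.
Proof. apply wr_vseq. Qed.

Theorem theorem2 :
  (forall V : lval, tilde (vo V) = dag V) /\
  (forall (M : lterm) (N : vterm), wr (vseq M N) = cps M (CLam (wr N))) /\
  (forall M : lterm, wr (bullet M) = star M) /\
  (forall M : lterm, minus (bullet M) = overline M).
Proof.
  split; [exact tilde_vo|].
  split; [exact wr_vseq|].
  split; [exact wr_bullet|].
  intros M; unfold minus, overline; rewrite wr_bullet; reflexivity.
Qed.
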